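(* Let $Z$ be a random variable and $M\ge0$ a random variable, and let $C,D$ be constants such that for every $\kappa>0$ and $\delta\in(0,1)$, $\Pr\big[Z\ge C(\kappa+M)\sqrt{\log(1/\delta)+D+\log(1+M/\kappa)}\big]\le\delta$. Then for any $\beta,\kappa>0$ and $\delta\in(0,1)$, \[ \Pr\Big[Z\ge C((1+\beta)M+\kappa)\sqrt{\log\tfrac2\delta+2\,\mathrm{lil}\big(\tfrac{\beta M}{\kappa}\big)+D+\log\big(1+\tfrac e\beta\big)}\Big]\le\delta. \] In particular, if $D\gtrsim1$, then taking $\beta=1$, $\Pr\big[Z\gtrsim C(M+\kappa)\sqrt{\log\frac1\delta+\mathrm{lil}(\frac M\kappa)+D}\big]\le\delta$.
   Context: $\log_+x:=\max\{1,\log x\}$, $\mathrm{lil}(x):=\log_+(\log_+x)$. $\lesssim,\gtrsim$ hide universal constants. *)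

From HB Require Import structures.
From mathcomp Require Import all_boot all_order all_algebra.
From mathcomp Require Import all_classical all_reals all_analysis.
Set Implicit Arguments. Unset Strict Implicit. Unset Printing Implicit Defensive.
Import Order.TTheory GRing.Theory Num.Theory.
Local Open Scope ring_scope.
Local Open Scope classical_set_scope.

Definition logp {R : realType} (x : R) : R := Num.max 1 (ln x).
Definition lil {R : realType} (x : R) : R := logp (logp x).

Definition ge_event {T : Type} {R : realType} (Z t : T -> R) : set T :=
  [set w | t w <= Z w].

Definition tail_hyp {R : realType} {d : measure_display} {T : measurableType d}
  (P : probability T R) (Z M : {RV P >-> R}) (C D : R) : Prop :=
  forall kappa delta : R, 0 < kappa -> 0 < delta < 1 ->
    (P (ge_event Z (fun w => (C * (kappa + M w) *
                 Num.sqrt (ln (delta^-1) + D + ln (1 + M w / kappa)))%R))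
       <= delta%:E)%E.
Arguments tail_hyp {R d T} P Z M C D.

From HB Require Import structures.
From mathcomp Require Import all_boot all_order all_algebra.
From mathcomp Require Import all_classical all_reals all_analysis.
From mathcomp Require Import ring lra measurable_realfun.
Set Implicit Arguments.
Unset Strict Implicit.
Unset Printing Implicit Defensive.

Import Order.TTheory GRing.Theory Num.Theory.
Local Open Scope ring_scope.
Local Open Scope classical_set_scope.

(* Apply the tail bound at the geometric scales kappa e^n with
   confidence levels delta_n summing to delta, and take a union bound.  For
   x = beta M / kappa, the scale n = floor (ln x) (or n = 0 when x < e)
   satisfies kappa e^n + M <= (1 + beta) M + kappa and M / (kappa e^n) <= e / beta,
   while ln (1 / delta_n) <= ln (2 / delta) + 2 lil x because n <= ln x.
   A negative C is impossible: the thresholds at the scales n + 1 then tend to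
   -oo, so the events would cover the whole space with total mass < 1. *)

Section real_bounds.
Variable R : realType.
Implicit Types (a b x m C D beta kappa delta : R) (n : nat).

Lemma ln_le_ln a b : 0 < a -> a <= b -> ln a <= ln b.
Proof. by move=> a_gt0 ab; rewrite ler_ln ?posrE // (lt_le_trans a_gt0). Qed.

Lemma logp_ge1 x : 1 <= logp x.
Proof. by rewrite /logp le_max lexx. Qed.

Lemma ln_le_logp x : ln x <= logp x.
Proof. by rewrite /logp le_max lexx orbT. Qed.

Lemma lil_ge1 x : 1 <= lil x.
Proof. exact: logp_ge1. Qed.

Lemma ln_le_lil x n : (0 < n)%N -> n%:R <= ln x -> ln n%:R <= lil x.
Proof.
move=> n_gt0 n_le; apply: le_trans (ln_le_logp _); apply: ln_le_ln.
  by rewrite ltr0n.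
exact: le_trans n_le (ln_le_logp _).
Qed.

Lemma ln_9half_le2 : ln (9 / 2) <= 2 :> R.
Proof.
have e_half : 3 / 2 <= expR (1 / 2) :> R by apply: le_trans (expR_ge1Dx _); lra.
have e2 : expR 2 = (expR (1 / 2) ^+ 2) ^+ 2 :> R.
  by rewrite -exprM -expRM_natl; congr expR; lra.
rewrite -[leRHS]expRK; apply: ln_le_ln; first lra.
have : 9 / 4 <= expR (1 / 2) ^+ 2 :> R by rewrite expr2; nra.
by rewrite e2 [in X in _ <= X]expr2; nra.
Qed.

(* The masses delta / 3 and 2 delta / (3 n (n + 1)), n >= 1, add up to delta
   and keep ln (1 / delta_n) within ln (2 / delta) + 2 max(1, ln n). *)
Definition peel_weight (delta : R) n : R :=
  if n is 0 then delta / 3 else 2 * delta / (3 * (n%:R * (n%:R + 1))).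

Lemma peel_weight_gt0 delta n : 0 < delta -> 0 < peel_weight delta n.
Proof.
move=> d_gt0; case: n => [|n] /=; first exact: divr_gt0.
by rewrite divr_gt0 ?mulr_gt0 ?addr_gt0.
Qed.

Lemma peel_weight_le delta n : 0 < delta -> peel_weight delta n <= delta.
Proof.
move=> d_gt0; case: n => [|n] /=; first lra.
have n_ge1 : 1 <= n.+1%:R :> R by rewrite ler1n.
rewrite ler_pdivrMr; last by rewrite !mulr_gt0 ?addr_gt0.
by nra.
Qed.

Lemma peel_weight_itv delta n : 0 < delta < 1 -> 0 < peel_weight delta n < 1.
Proof.
case/andP=> d_gt0 d_lt1; rewrite peel_weight_gt0 //=.
exact: le_lt_trans (peel_weight_le n d_gt0) d_lt1.
Qed.

Lemma peel_weight_partial_sum delta n :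
  \sum_(0 <= i < n.+1) peel_weight delta i = delta - 2 * delta / (3 * n.+1%:R).
Proof.
elim: n => [|n IH]; first by rewrite big_nat1 /=; field.
rewrite big_nat_recr //= IH -[n.+2%:R]natr1.
have : 0 < n.+1%:R :> R by rewrite ltr0Sn.
set N := n.+1%:R => N_gt0; field.
by have := ler0n R n; rewrite !gt_eqF //; lra.
Qed.

Lemma peel_weight_series_le delta : 0 < delta ->
  (\sum_(0 <= n <oo) (peel_weight delta n)%:E <= delta%:E)%E.
Proof.
move=> d_gt0; apply: lime_le.
  by apply: is_cvg_nneseries => n _ _; rewrite lee_fin ltW ?peel_weight_gt0.
apply: nearW => -[|n]; first by rewrite big_geq // lee_fin ltW.
rewrite sumEFin peel_weight_partial_sum lee_fin gerBl.
by rewrite divr_ge0 ?mulr_ge0 //; lra.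
Qed.

Lemma ln_inv_peel_weight_le delta L n : 0 < delta -> 1 <= L ->
  ((0 < n)%N -> ln n%:R <= L) ->
  ln (peel_weight delta n)^-1 <= ln (2 / delta) + 2 * L.
Proof.
move=> d_gt0 L_ge1; case: n => [|n] /= lnn_le.
  have -> : (delta / 3)^-1 = 2 / delta * (3 / 2) by field; rewrite gt_eqF.
  rewrite lnM ?posrE ?divr_gt0 // lerD2l.
  by have := @ln_sublinear R (3 / 2) ltac:(lra); lra.
have := lnn_le isT; have : 1 <= n.+1%:R :> R by rewrite ler1n.
set N := n.+1%:R => N_ge1 lnN_le.
have -> : (2 * delta / (3 * (N * (N + 1))))^-1 = 2 / delta * (3 * N * (N + 1) / 4).
  by field; rewrite !gt_eqF //; lra.
rewrite lnM ?posrE ?divr_gt0 // ?lerD2l; last by nra.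
have [N_ge3 | N_lt3] := leP 3 N.
  apply: (@le_trans _ _ (ln (N ^+ 2))); first by apply: ln_le_ln; rewrite ?expr2; nra.
  by rewrite lnXn; lra.
have N_le2 : N <= 2 by move: N_lt3; rewrite /N !ltr_nat ler_nat.
apply: (@le_trans _ _ (ln (9 / 2))); first by apply: ln_le_ln; nra.
by have := ln_9half_le2; lra.
Qed.

Lemma exists_nat_mul_le C z : C < 0 -> exists n, C * n.+1%:R <= z.
Proof.
move=> C_lt0; have /andP[_ lt_n] := truncn_itv (normr_ge0 (z / C)).
exists (Num.truncn `|z / C|).
have := ler_wnM2l (ltW C_lt0) (le_trans (ler_norm _) (ltW lt_n)).
by rewrite [C * (z / C)]mulrC divfK ?lt_eqF.
Qed.

Lemma exists_peel_index x : 0 <= x ->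
  exists n, [/\ expR n%:R <= 1 + x, x <= expR n.+1%:R & (0 < n)%N -> n%:R <= ln x].
Proof.
move=> x_ge0; have [x_lt_e | e_le_x] := ltP x (expR 1).
  by exists 0%N; rewrite expR0 ler_wpDr // ltW.
have x_gt0 : 0 < x := lt_le_trans (expR_gt0 _) e_le_x.
have lnx_ge1 : 1 <= ln x by rewrite -ler_expR lnK.
have /andP[n_le n_gt] := truncn_itv (le_trans ler01 lnx_ge1).
exists (Num.truncn (ln x)); split => //.
- rewrite (le_trans _ (ler_wpDl ler01 (lexx x))) //.
  by rewrite -[leRHS](lnK (x := x)) ?posrE // ler_expR.
- by rewrite -[leLHS](lnK (x := x)) ?posrE // ler_expR ltW.
Qed.

Definition tail_threshold C D kappa delta m : R :=
  C * (kappa + m) * Num.sqrt (ln delta^-1 + D + ln (1 + m / kappa)).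

Definition lil_threshold C D beta kappa delta m : R :=
  C * ((1 + beta) * m + kappa) *
  Num.sqrt (ln (2 / delta) + 2 * lil (beta * m / kappa) + D + ln (1 + expR 1 / beta)).

Lemma tail_threshold_le_lil_threshold C D beta kappa delta m n :
  0 <= C -> 0 < beta -> 0 < kappa -> 0 < delta -> 0 <= m ->
  let x := beta * m / kappa in
  expR n%:R <= 1 + x -> x <= expR n.+1%:R -> ((0 < n)%N -> n%:R <= ln x) ->
  tail_threshold C D (kappa * expR n%:R) (peel_weight delta n) m
  <= lil_threshold C D beta kappa delta m.
Proof.
move=> C_ge0 b_gt0 k_gt0 d_gt0 m_ge0 x e_le x_le n_le.
have kE_gt0 : 0 < kappa * expR n%:R by rewrite mulr_gt0 ?expR_gt0.
have kx : kappa * x = beta * m by rewrite /x mulrC divfK ?gt_eqF.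
have scale : kappa * expR n%:R + m <= (1 + beta) * m + kappa.
  by have := ler_wpM2l (ltW k_gt0) e_le; nra.
have ratio : m / (kappa * expR n%:R) <= expR 1 / beta.
  rewrite ler_pdivrMr // mulrAC ler_pdivlMr // mulrCA -expRD addrC natr1.
  by rewrite mulrC -kx ler_pM2l.
have ln_w : ln (peel_weight delta n)^-1 <= ln (2 / delta) + 2 * lil x.
  apply: ln_inv_peel_weight_le (lil_ge1 x) _ => // n_gt0.
  exact: ln_le_lil n_gt0 (n_le n_gt0).
have ln_ratio : ln (1 + m / (kappa * expR n%:R)) <= ln (1 + expR 1 / beta).
  apply: ln_le_ln; last by rewrite lerD2l.
  by rewrite ltr_pwDl ?divr_ge0 // ltW.
apply: ler_pM; rewrite ?sqrtr_ge0 ?ler_wpM2l //.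
- by rewrite mulr_ge0 // addr_ge0 // ltW.
- by rewrite ler_wsqrtr //; lra.
Qed.

Lemma exists_tail_threshold_le C D beta kappa delta m :
  0 <= C -> 0 < beta -> 0 < kappa -> 0 < delta -> 0 <= m ->
  exists n, tail_threshold C D (kappa * expR n%:R) (peel_weight delta n) m
            <= lil_threshold C D beta kappa delta m.
Proof.
move=> C_ge0 b_gt0 k_gt0 d_gt0 m_ge0.
have [|n [e_le x_le n_le]] := @exists_peel_index (beta * m / kappa).
  exact: divr_ge0 (mulr_ge0 (ltW b_gt0) m_ge0) (ltW k_gt0).
by exists n; apply: tail_threshold_le_lil_threshold.
Qed.

Lemma tail_threshold_le_neg C D kappa delta m :
  C < 0 -> 0 < kappa -> 0 < delta <= expR (D - 1) -> 0 <= m ->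
  tail_threshold C D kappa delta m <= C * kappa.
Proof.
move=> C_lt0 k_gt0 /andP[d_gt0 d_le] m_ge0.
have ln_inv : 1 - D <= ln delta^-1.
  rewrite -[leLHS]expRK; apply: ln_le_ln; first exact: expR_gt0.
  by rewrite -opprB expRN lef_pV2 ?posrE ?expR_gt0.
have ln_1D : 0 <= ln (1 + m / kappa) by apply: ln_ge0; rewrite lerDl divr_ge0 // ltW.
have sqrt_ge1 : 1 <= Num.sqrt (ln delta^-1 + D + ln (1 + m / kappa)).
  by rewrite -[leLHS]sqrtr1 ler_wsqrtr //; lra.
rewrite /tail_threshold; set s := Num.sqrt _ in sqrt_ge1 *.
have Ckm_le0 : C * (kappa + m) <= 0.
  by rewrite mulr_le0_ge0 // ?addr_ge0 // ltW.
by have := ler_wnM2l Ckm_le0 sqrt_ge1; rewrite mulr1; nra.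
Qed.

Lemma lil_threshold1_le C D kappa delta m :
  0 <= C -> 1 <= D -> 0 < kappa -> 0 < delta < 1 -> 0 <= m ->
  lil_threshold C D 1 kappa delta m
  <= 4 * C * (m + kappa) * Num.sqrt (ln delta^-1 + lil (m / kappa) + D).
Proof.
move=> C_ge0 D_ge1 k_gt0 /andP[d_gt0 d_lt1] m_ge0.
rewrite /lil_threshold mul1r divr1.
have ln2 : ln 2 <= 1 :> R.
  by rewrite -[leRHS]expRK ln_le_ln // (le_trans _ (expR_ge1Dx _)) //; lra.
have ln1e : ln (1 + expR 1) <= 2 :> R.
  rewrite -[leRHS]expRK ln_le_ln // -[2]/(1 + 1) expRD.
  by have := expR_ge1Dx (1 : R); nra.
have ln2d : ln (2 / delta) = ln 2 + ln delta^-1 by rewrite lnM ?posrE ?invr_gt0.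
have lnd : 0 <= ln delta^-1 by rewrite ln_ge0 // invf_ge1 ?ltW.
have := lil_ge1 (m / kappa).
set S := ln delta^-1 + lil (m / kappa) + D => lil_ge1'.
have sqrt4S : Num.sqrt (4 * S) = 2 * Num.sqrt S.
  have -> : 4 * S = 2 ^+ 2 * S by rewrite expr2; ring.
  by rewrite sqrtrM ?sqr_ge0 // sqrtr_sqr ger0_norm.
have S_le : ln (2 / delta) + 2 * lil (m / kappa) + D + ln (1 + expR 1) <= 4 * S.
  by rewrite ln2d /S; lra.
have -> : 4 * C * (m + kappa) * Num.sqrt S = 2 * C * (m + kappa) * Num.sqrt (4 * S).
  by rewrite sqrt4S; ring.
by apply: ler_pM; rewrite ?sqrtr_ge0 ?ler_wsqrtr //; nra.
Qed.

End real_bounds.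

Lemma measurable_sqrt (R : realType) : measurable_fun [set: R] Num.sqrt.
Proof. exact: continuous_measurable_fun (@sqrt_continuous R). Qed.

Lemma measurable_lil (R : realType) : measurable_fun [set: R] lil.
Proof.
have mlogp : measurable_fun [set: R] logp.
  exact: measurable_maxr (measurable_cst _) (@measurable_ln R).
exact: (measurableT_comp mlogp mlogp).
Qed.

Local Ltac measurable_arith :=
  repeat first
    [ exact: measurable_cst | exact: measurable_id
    | apply: measurable_funM | apply: measurable_funD
    | apply: (measurableT_comp (@measurable_sqrt _))
    | apply: (measurableT_comp (@measurable_lil _))
    | apply: (measurableT_comp (@measurable_ln _)) ].

Section measurable_thresholds.
Variable R : realType.
Implicit Types C D beta kappa delta : R.

Lemma measurable_tail_threshold C D kappa delta :
  measurable_fun [set: R] (tail_threshold C D kappa delta).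
Proof. rewrite /tail_threshold; measurable_arith. Qed.

Lemma measurable_lil_threshold C D beta kappa delta :
  measurable_fun [set: R] (lil_threshold C D beta kappa delta).
Proof. rewrite /lil_threshold; measurable_arith. Qed.

End measurable_thresholds.

Section union_bound.
Variables (R : realType) (d : measure_display) (T : measurableType d).

Lemma measure_cover_le (mu : {measure set T -> \bar R}) (A : set T)
    (F : nat -> set T) (w : nat -> R) (e : R) :
  measurable A -> (forall n, measurable (F n)) -> A `<=` \bigcup_n F n ->
  (forall n, mu (F n) <= (w n)%:E)%E ->
  (\sum_(0 <= n <oo) (w n)%:E <= e%:E)%E -> (mu A <= e%:E)%E.
Proof.
move=> mA mF AF muF sum_le.
apply: le_trans (measure_sigma_subadditive mu mF mA AF) _.
by apply: le_trans sum_le; apply: lee_nneseries.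
Qed.

Lemma measurable_ge_event (Z t : T -> R) :
  measurable_fun [set: T] Z -> measurable_fun [set: T] t ->
  measurable (ge_event Z t).
Proof. by move=> mZ mt; rewrite -[ge_event _ _]setTI; exact: measurable_fun_le. Qed.

Lemma subset_ge_event (Z s t : T -> R) :
  (forall w, t w <= s w) -> ge_event Z s `<=` ge_event Z t.
Proof. by move=> ts w; exact: le_trans (ts w). Qed.

End union_bound.

Section tail_events.
Variables (R : realType) (d : measure_display) (T : measurableType d).
Variables (P : probability T R) (Z M : {RV P >-> R}) (C D : R).
Hypothesis M_ge0 : forall w, 0 <= M w.
Hypothesis tail : tail_hyp P Z M C D.

Lemma measurable_ge_event_comp (h : R -> R) :
  measurable_fun [set: R] h -> measurable (ge_event Z (h \o M)).
Proof.
move=> mh; apply: measurable_ge_event; first exact: measurable_funPT.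
exact: (measurableT_comp mh (measurable_funPT M)).
Qed.

Lemma tail_hyp_C_ge0 : 0 <= C.
Proof.
rewrite leNgt; apply/negP => C_lt0.
pose e := Num.min (1 / 2) (expR (D - 1)).
have e_gt0 : 0 < e by rewrite lt_min expR_gt0 andbT; lra.
have e_le_half : e <= 1 / 2 by rewrite ge_min lexx.
have e_le_exp : e <= expR (D - 1) by rewrite ge_min lexx orbT.
have : (P [set: T] <= e%:E)%E.
  apply: (measure_cover_le (F := fun n =>
    ge_event Z (tail_threshold C D n.+1%:R (peel_weight e n) \o M))).
  - exact: measurableT.
  - by move=> n; apply: measurable_ge_event_comp; exact: measurable_tail_threshold.
  - move=> w _; have [n Cn_le] := exists_nat_mul_le (Z w) C_lt0.
    exists n => //; apply: le_trans Cn_le; apply: tail_threshold_le_neg => //.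
    by rewrite peel_weight_gt0 // (le_trans (peel_weight_le _ e_gt0)).
  - move=> n; apply: tail; first by rewrite ltr0Sn.
    by apply: peel_weight_itv; rewrite e_gt0 /=; lra.
  - exact: peel_weight_series_le.
by rewrite probability_setT lee_fin; lra.
Qed.

Lemma tail_hyp_lil (beta kappa delta : R) : 0 < beta -> 0 < kappa -> 0 < delta < 1 ->
  (P (ge_event Z (lil_threshold C D beta kappa delta \o M)) <= delta%:E)%E.
Proof.
move=> b_gt0 k_gt0 d_itv; have /andP[d_gt0 _] := d_itv.
apply: (measure_cover_le (F := fun n =>
  ge_event Z (tail_threshold C D (kappa * expR n%:R) (peel_weight delta n) \o M))).
- by apply: measurable_ge_event_comp; exact: measurable_lil_threshold.
- by move=> n; apply: measurable_ge_event_comp; exact: measurable_tail_threshold.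
- move=> w Zw; have [n le_n] := exists_tail_threshold_le D tail_hyp_C_ge0 b_gt0 k_gt0 d_gt0 (M_ge0 w).
  by exists n => //; exact: le_trans le_n Zw.
- by move=> n; apply: tail; rewrite ?mulr_gt0 ?expR_gt0 ?peel_weight_itv.
- exact: peel_weight_series_le.
Qed.

Lemma tail_hyp_lil1 (kappa delta : R) : 1 <= D -> 0 < kappa -> 0 < delta < 1 ->
  (P (ge_event Z (fun w => 4 * C * (M w + kappa) *
        Num.sqrt (ln delta^-1 + lil (M w / kappa) + D))%R) <= delta%:E)%E.
Proof.
move=> D_ge1 k_gt0 d_itv.
apply: le_trans (tail_hyp_lil ltr01 k_gt0 d_itv).
apply: le_measure; rewrite ?inE.
- apply: (measurable_ge_event_comp (h := fun m =>
    4 * C * (m + kappa) * Num.sqrt (ln delta^-1 + lil (m / kappa) + D))).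
  measurable_arith.
- by apply: measurable_ge_event_comp; exact: measurable_lil_threshold.
- apply: subset_ge_event => w; apply: lil_threshold1_le; rewrite ?tail_hyp_C_ge0 //.
Qed.

End tail_events.

Theorem lemma9 (R : realType) :
  (forall (d : measure_display) (T : measurableType d) (P : probability T R)
          (Z M : {RV P >-> R}) (C D : R),
     (forall w, 0 <= M w) ->
     tail_hyp P Z M C D ->
     forall beta kappa delta : R, 0 < beta -> 0 < kappa -> 0 < delta < 1 ->
       (P (ge_event Z (fun w => (C * ((1 + beta) * M w + kappa) *
                    Num.sqrt (ln (2 / delta) + 2 * lil (beta * M w / kappa) + D
                              + ln (1 + expR 1 / beta)))%R))
          <= delta%:E)%E)
  /\
  (exists c0 c1 : R, 0 < c0 /\ 0 < c1 /\
     forall (d : measure_display) (T : measurableType d) (P : probability T R)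
            (Z M : {RV P >-> R}) (C D : R),
       c0 <= D ->
       (forall w, 0 <= M w) ->
       tail_hyp P Z M C D ->
       forall kappa delta : R, 0 < kappa -> 0 < delta < 1 ->
         (P (ge_event Z (fun w => (c1 * C * (M w + kappa) *
                      Num.sqrt (ln (delta^-1) + lil (M w / kappa) + D))%R))
            <= delta%:E)%E).
Proof.
split=> [d T P Z M C D M_ge0 tail beta kappa delta | ].
  exact: tail_hyp_lil.
exists 1, 4; split; first exact: ltr01.
split=> [| d T P Z M C D D_ge1 M_ge0 tail kappa delta]; first by rewrite ltr0n.
exact: tail_hyp_lil1.
Qed.
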